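(* Let $\mathrm{nF}(F)$ denote the number of reflective numerical semigroups with Frobenius number $F$. Then $\mathrm{nF}(F)=(1-\log 2)F+O(\sqrt{F})$ as $F\to\infty$ (with $\log$ the natural logarithm); in particular $\lim_{F\to\infty}\mathrm{nF}(F)/F=1-\log 2$.
   Context: A numerical semigroup is a submonoid $S$ of $(\mathbb{N}_0,+)$ with finite complement; its genus is the number of elements of $\mathbb{N}_0\setminus S$ and its Frobenius number is its largest gap. A numerical semigroup $S$ of genus $g\ge1$ is called reflective if for every $z\in\{0,1,\dots,g-1\}$ exactly one of $z$ and $z+g$ belongs to $S$. *)

From mathcomp Require Import all_boot all_order all_algebra finmap.
From mathcomp Require Import all_classical all_reals all_analysis.
Set Implicit Arguments. Unset Strict Implicit. Unset Printing Implicit Defensive.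
Local Open Scope classical_set_scope.
Local Open Scope fset_scope.

Definition numerical_semigroup (S : set nat) : Prop :=
  S 0%N /\ (forall a b, S a -> S b -> S (a + b)%N) /\ finite_set (~` S).

Definition genus (S : set nat) : nat := #|` fset_set (~` S)|.

Definition is_frobenius (S : set nat) (F : nat) : Prop :=
  ~ S F /\ (forall n, ~ S n -> (n <= F)%N).

Definition reflective (S : set nat) : Prop :=
  (1 <= genus S)%N /\
  forall z, (z < genus S)%N -> (S z <-> ~ S (z + genus S)%N).

Definition nF (F : nat) : nat :=
  #|` fset_set [set S : set nat | numerical_semigroup S /\ reflective S
                                  /\ is_frobenius S F] |.

(* A reflective numerical semigroup S with genus g and Frobenius number F is
   determined by its multiplicity d: below g it contains exactly the multiples
   of d up to m = F - g, on [g, 2g) it contains z + g exactly for the gaps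
   z < g, and it contains everything from 2g on.  Writing F = 2kd + r, such a
   semigroup exists iff 0 < r < d, so nF(F) counts the d <= F + 1 with
   F mod 2d in (0, d).  For fixed k >= 1 these d fill the interval
   (F/(2k+1), (F-1)/(2k)], so nF(F) is F * sum_k (1/(2k) - 1/(2k+1)) = (1 - log 2) F
   up to O(1) per k; cutting the sum at k = sqrt F bounds both the accumulated
   rounding errors and the tail by O(sqrt F). *)

From mathcomp Require Import all_boot all_order all_algebra finmap.
From mathcomp Require Import all_classical all_reals all_analysis.
From mathcomp Require Import zify ring lra.
Import Order.TTheory GRing.Theory Num.Theory numFieldNormedType.Exports.

Set Implicit Arguments. Unset Strict Implicit. Unset Printing Implicit Defensive.

Definition refl_model (d m g x : nat) : bool :=
  if x < g then (d %| x) && (x <= m)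
  else if x < g.*2 then ~~ ((d %| x - g) && (x - g <= m)) else true.

Lemma dvdn_ltn_leq_add d m n : 0 < d -> d %| m -> d %| n -> m < n -> m + d <= n.
Proof.
move=> d0 /dvdnP[a ->] /dvdnP[b ->]; rewrite ltn_pmul2r // => ab.
by rewrite -mulSnr leq_mul2r ab orbT.
Qed.

Lemma count_reflecting (P : pred nat) g :
  (forall z, z < g -> P (z + g) = ~~ P z) -> count P (iota 0 g.*2) = g.
Proof.
move=> Prefl; rewrite -addnn iotaD count_cat add0n.
have -> : iota g g = map (addn g) (iota 0 g) by rewrite -iotaDl addn0.
rewrite count_map (@eq_in_count _ (preim (addn g) P) (predC P)).
  by rewrite count_predC size_iota.
by move=> z; rewrite mem_iota add0n /= => zg; rewrite addnC Prefl.
Qed.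

Section ReflModel.
Variables (d m g : nat).
Hypotheses (d_gt0 : 0 < d) (d_dvd_m : d %| m) (m_lt_g : m < g) (g_lt_md : g < m + d).

Lemma refl_model_ge x : g.*2 <= x -> refl_model d m g x.
Proof. by move=> h; rewrite /refl_model ifF ?ifF //; lia. Qed.

Lemma refl_model_reflect z : z < g -> refl_model d m g (z + g) = ~~ refl_model d m g z.
Proof.
move=> zg; rewrite /refl_model zg ifF; last by lia.
by rewrite ifT ?addnK //; lia.
Qed.

Lemma refl_model0 : refl_model d m g 0.
Proof. by rewrite /refl_model ifT ?dvdn0 //; lia. Qed.

Lemma refl_model_frob : ~~ refl_model d m g (g + m).
Proof. by rewrite /refl_model ifF ?ifT ?addKn ?d_dvd_m ?leqnn //; lia. Qed.

Lemma refl_model_gap_le n : ~~ refl_model d m g n -> n <= g + m.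
Proof.
rewrite /refl_model; case: ifP => ng; first by lia.
by case: ifP => // _; rewrite negbK => /andP[_]; lia.
Qed.

Lemma refl_model_add x y :
  refl_model d m g x -> refl_model d m g y -> refl_model d m g (x + y).
Proof.
(* Only a sum with a summand below g needs care: multiples of d stay
   multiples, and a shift by a multiple of d maps gaps to gaps. *)
have small_add u v : u < g -> refl_model d m g u -> refl_model d m g v ->
    refl_model d m g (u + v).
  move=> ug; rewrite /refl_model ug => /andP[du um].
  case: ifP => vg.
    move=> /andP[dv vm]; have duv : d %| u + v by rewrite dvdn_add.
    case: ifP => uvg.
      rewrite duv /=; case: (leqP (u + v) m) => // m_lt.
      by have := dvdn_ltn_leq_add d_gt0 d_dvd_m duv m_lt; lia.
    rewrite ifT; last by lia.
    apply/negP => /andP[duvg _]; have dg : d %| g.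
      by have := dvdn_sub duv duvg; rewrite subKn //; lia.
    by have := dvdn_ltn_leq_add d_gt0 d_dvd_m dg m_lt_g; lia.
  case: ifP => v2g; last by move=> _; rewrite ifF ?ifF //; lia.
  move=> hv; rewrite ifF; last by lia.
  case: ifP => // _; apply: contra hv => /andP[].
  have -> : u + v - g = u + (v - g) by lia.
  by rewrite (dvdn_addr _ du) => -> /=; lia.
case: (ltnP x g) => xg; first exact: small_add.
case: (ltnP y g) => yg; first by move=> hx hy; rewrite addnC small_add.
by move=> _ _; apply: refl_model_ge; lia.
Qed.

Lemma refl_model_d : refl_model d m g d.
Proof.
have m0 : m < d -> m = 0.
  by move: d_dvd_m => /dvdnP[[|a] ->] //; rewrite mulSn ltnNge leq_addr.
rewrite /refl_model; case: ifP => dg.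
  by rewrite dvdnn /=; case: (leqP d m) => // /m0; lia.
case: ifP => // _; apply/negP => /andP[_].
by case: (leqP d m) => [|/m0]; lia.
Qed.

End ReflModel.

Lemma refl_model_lt_multiplicity d d' m g : 0 < d -> d < d' -> d' %| m -> m < g ->
  d' <= (g + m).+1 -> ~~ refl_model d' m g d.
Proof.
move=> d0 dd' dm mg dF; rewrite /refl_model; case: ifP => dg.
  by apply/negP => /andP[/dvdn_leq]; lia.
have m0 : m = 0 by move: dm => /dvdnP[[|a] ea] //; move: ea; rewrite mulSn; lia.
have -> : d = g by lia.
by rewrite ifT ?subnn ?dvdn0 //; lia.
Qed.

Definition admissible F d := [&& 0 < d, d <= F.+1, 0 < F %% d.*2 & F %% d.*2 < d].

(* With F = 2kd + r, the model has m = kd and genus g = kd + r. *)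
Definition refl_m F d := F %/ d.*2 * d.
Definition refl_g F d := F - refl_m F d.
Definition refl_sg F d : pred nat := refl_model d (refl_m F d) (refl_g F d).

Lemma admissible_model F d : admissible F d ->
  [/\ 0 < d, d %| refl_m F d, refl_m F d < refl_g F d,
      refl_g F d < refl_m F d + d & F = refl_g F d + refl_m F d].
Proof.
case/and4P=> d0 dF r0 rd; rewrite /refl_g /refl_m.
have := divn_eq F d.*2; set k := F %/ d.*2; set r := F %% d.*2 in r0 rd *.
have -> : k * d.*2 = k * d + k * d by rewrite -addnn mulnDr.
by split; rewrite ?dvdn_mull //; lia.
Qed.

Lemma model_admissible F d m g : 0 < d -> d %| m -> m < g -> g < m + d ->
  d <= F.+1 -> F = g + m -> [/\ admissible F d, refl_m F d = m & refl_g F d = g].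
Proof.
move=> d0 /dvdnP[j ->] mg gmd dF eF.
have eF2 : F = j * d.*2 + (g - j * d) by rewrite -addnn mulnDr; lia.
have r_lt : g - j * d < d.*2 by lia.
have Fdiv : F %/ d.*2 = j by rewrite eF2 divnMDl ?divn_small ?addn0 //; lia.
have Fmod : F %% d.*2 = g - j * d by rewrite eF2 modnMDl modn_small.
rewrite /refl_g /refl_m Fdiv /admissible d0 dF Fmod; split => //; lia.
Qed.

Section ReflectivePred.
Variables (s : pred nat) (F g : nat).
Hypotheses (s0 : s 0) (s_add : forall x y, s x -> s y -> s (x + y))
  (g_gt0 : 0 < g) (s_reflect : forall z, z < g -> s (z + g) = ~~ s z)
  (s_frob : ~~ s F) (s_gap_le : forall n, ~~ s n -> n <= F)
  (s_genus : count (predC s) (iota 0 F.+1) = g).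

Lemma frob_lt_double_genus : F < g.*2.
Proof.
rewrite ltnNge; apply/negP => g2F.
move: s_genus; have -> : F.+1 = g.*2 + (F.+1 - g.*2) by lia.
rewrite iotaD count_cat count_reflecting; last first.
  by move=> z zg; rewrite /= s_reflect ?negbK.
have : 0 < count (predC s) (iota (0 + g.*2) (F.+1 - g.*2)).
  by rewrite -has_count; apply/hasP; exists F; rewrite ?mem_iota //; lia.
lia.
Qed.

Lemma genus_le_frob : g <= F.
Proof. by apply: s_gap_le; rewrite -(add0n g) s_reflect // s0. Qed.

Let m := F - g.

Lemma m_lt_genus : m < g.
Proof. by have := frob_lt_double_genus; rewrite /m; lia. Qed.

Lemma mem_ge_double_genus x : g.*2 <= x -> s x.
Proof.
by move=> h; apply/negPn/negP => /s_gap_le; have := frob_lt_double_genus; lia.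
Qed.

Lemma mem_lt_genus_le x : x < g -> s x -> x <= m.
Proof.
move=> xg sx; have /s_gap_le : ~~ s (x + g) by rewrite s_reflect // sx.
by rewrite /m; lia.
Qed.

Lemma mem_m : s m.
Proof.
have := s_reflect m_lt_genus; rewrite /m subnK ?genus_le_frob // => e.
by apply/negPn; rewrite -e.
Qed.

Lemma mem_mull d j : s d -> s (j * d).
Proof. by move=> sd; elim: j => [|j IHj]; rewrite ?mul0n // mulSn s_add. Qed.

Lemma exists_pos_mem : exists x, (0 < x) && s x.
Proof. by exists F.+1; apply/andP; split => //; apply/negPn/negP => /s_gap_le; lia. Qed.

Definition multiplicity := ex_minn exists_pos_mem.

Lemma multiplicityP : [/\ 0 < multiplicity, s multiplicity &
  forall x, 0 < x -> s x -> multiplicity <= x].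
Proof.
rewrite /multiplicity; case: ex_minnP => d /andP[d0 sd] d_min.
by split => // x x0 sx; apply: d_min; rewrite x0.
Qed.

(* Reduce x modulo d: the remainder r is a gap, so r + g is in s, and adding
   a multiple of d brings us to x + g, which must be a gap. *)
Lemma multiplicity_dvd_low x : x <= m -> s x -> multiplicity %| x.
Proof.
case: multiplicityP => d0 sd d_min xm sx.
set d := multiplicity in d0 sd d_min *.
have e := divn_eq x d; have r_lt : x %% d < d by rewrite ltn_mod.
case: (posnP (x %% d)) => r0; first by apply/dvdnP; exists (x %/ d); lia.
have sr : ~~ s (x %% d) by apply/negP => /(d_min _ r0); lia.
have dx : d <= x by apply: d_min => //; case: (posnP x) r0 => // ->; rewrite mod0n.
have srg : s (x %% d + g) by rewrite s_reflect ?sr //; have := m_lt_genus; lia.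
have := s_add srg (mem_mull (x %/ d) sd).
have -> : x %% d + g + x %/ d * d = x + g by lia.
by rewrite s_reflect ?sx //; have := m_lt_genus; lia.
Qed.

Lemma reflective_pred_model : exists d, admissible F d /\ s =1 refl_sg F d.
Proof.
case: multiplicityP => d0 sd d_min; set d := multiplicity in d0 sd d_min *.
have mg := m_lt_genus.
have dm : d %| m by apply: multiplicity_dvd_low mem_m.
have smd : s (m + d) by apply: s_add mem_m sd.
have gmd : g < m + d.
  case: (ltngtP (m + d) g) => // [/mem_lt_genus_le/(_ smd)|e]; first lia.
  by move: smd; rewrite e -(add0n g) s_reflect // s0.
have dF : d <= F.+1 by apply: d_min => //; apply/negPn/negP => /s_gap_le; lia.
have eF : F = g + m by rewrite /m; have := genus_le_frob; lia.
case: (model_admissible d0 dm mg gmd dF eF) => adm em eg.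
exists d; split => // x; rewrite /refl_sg em eg /refl_model.
have low y : y < g -> s y = (d %| y) && (y <= m).
  move=> yg; apply/idP/andP => [sy|[/dvdnP[j ->] _]]; last exact: mem_mull.
  by split; [apply: multiplicity_dvd_low|]; rewrite ?mem_lt_genus_le.
case: ifP => xg; first exact: low.
case: ifP => x2g; last by apply: mem_ge_double_genus; lia.
by rewrite -[in LHS](subnK (_ : g <= x)) ?s_reflect ?low //; lia.
Qed.

End ReflectivePred.

Lemma sum_nat_indicator (c : bool) q a b :
  \sum_(a <= k < b) (c && (q == k)) = c && (a <= q < b).
Proof.
elim: b => [|b IHb]; first by rewrite big_geq //; case: c => /=; lia.
case: (ltnP b a) => [ba|ab]; first by rewrite big_geq //; case: (c) => /=; lia.
rewrite big_nat_recr //= IHb.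
by case: (c) => //=; case: (eqVneq q b) => [->|qb]; lia.
Qed.

Lemma count_partition_nat (P : pred nat) (f : nat -> nat) s K :
  (forall x, P x -> f x < K) ->
  count P s = \sum_(0 <= k < K) count (fun x => P x && (f x == k)) s.
Proof.
move=> fK; elim: s => [|x s IHs] /=; first by rewrite big1.
rewrite big_split /= -IHs sum_nat_indicator.
by case: (boolP (P x)) => //= Px; rewrite fK.
Qed.

Lemma count_iota_itv a b n :
  count (fun d => a < d <= b) (iota 0 n.+1) = minn b n - a.
Proof.
elim: n => [|n IHn]; first by rewrite /=; lia.
rewrite -[n.+2]addn1 iotaD count_cat IHn add0n /= addn0.
by case: (boolP (a < n + 1 <= b)) => /= h; lia.
Qed.

Definition quot_count F k :=
  count (fun d => admissible F d && (F %/ d.*2 == k)) (iota 0 F.+2).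

Lemma admissible_quotientE F d k : 0 < k ->
  admissible F d && (F %/ d.*2 == k) = (F %/ k.*2.+1 < d <= (F - 1) %/ k.*2).
Proof.
move=> k0; rewrite ltn_divLR // leq_divRL ?double_gt0 //.
have e1 : k * d.*2 = d * k.*2 by rewrite -!muln2 mulnCA.
have e2 : d * k.*2.+1 = d * k.*2 + d by rewrite mulnS addnC.
apply/idP/idP.
  case/andP=> /and4P[d0 dF r0 rd] /eqP Fk.
  by have := divn_eq F d.*2; rewrite Fk e2; lia.
case/andP=> h1 h2; have d0 : 0 < d by case: d h1 {e1 e2 h2}.
have dk : d <= d * k.*2 by rewrite leq_pmulr ?double_gt0.
set r := F - k * d.*2.
have eF : F = k * d.*2 + r by rewrite /r; lia.
have r_lt : r < d.*2 by rewrite /r; lia.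
have -> : F %/ d.*2 = k by rewrite eF divnMDl ?divn_small ?addn0 //; lia.
rewrite eqxx andbT /admissible eF modnMDl modn_small // d0 /=.
by apply/and3P; split; rewrite /r; lia.
Qed.

Lemma quot_countE F k : 0 < k -> quot_count F k = (F - 1) %/ k.*2 - F %/ k.*2.+1.
Proof.
move=> k0; rewrite /quot_count (eq_count (fun d => admissible_quotientE F d k0)).
rewrite count_iota_itv; congr (_ - _); apply/minn_idPl.
by rewrite (leq_trans (leq_div _ _)) //; lia.
Qed.

(* For k = 0 admissibility forces F < d <= F + 1. *)
Lemma quot_count0 F : quot_count F 0 <= 1.
Proof.
apply: (@leq_trans (count (pred1 F.+1) (iota 0 F.+2))); last first.
  by rewrite count_uniq_mem ?iota_uniq //; case: (_ \in _).
apply: sub_count => d /andP[/and4P[d0 dF r0 rd]] /eqP Fk.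
by have := divn_eq F d.*2; rewrite Fk /=; lia.
Qed.

Lemma sum_quot_count_tail F K :
  \sum_(K.+1 <= k < F.+1) quot_count F k <= F %/ K.+1.*2.
Proof.
have -> : \sum_(K.+1 <= k < F.+1) quot_count F k =
    count (fun d => admissible F d && (K.+1 <= F %/ d.*2 < F.+1)) (iota 0 F.+2).
  rewrite /quot_count; elim: (iota 0 F.+2) => [|x s IHs] /=; first by rewrite big1.
  by rewrite big_split /= IHs sum_nat_indicator.
rewrite -[X in _ <= X](subn0) -(minn_idPl (leq_trans (leq_div F _) (leqnSn F))).
rewrite -count_iota_itv; apply: sub_count => d /andP[/and4P[d0 dF _ _] /andP[Kk _]].
rewrite d0 leq_divRL ?double_gt0 //.
have : K.+1 * d.*2 <= F %/ d.*2 * d.*2 by rewrite leq_mul2r Kk orbT.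
have e : d * K.+1.*2 = K.+1 * d.*2 by rewrite -!muln2 mulnCA.
by have := divn_eq F d.*2; lia.
Qed.

Lemma count_admissible_split F K : K <= F ->
  count (admissible F) (iota 0 F.+2) = quot_count F 0 +
    \sum_(1 <= k < K.+1) quot_count F k + \sum_(K.+1 <= k < F.+1) quot_count F k.
Proof.
move=> KF; rewrite (@count_partition_nat _ (fun d => F %/ d.*2) _ F.+1).
  by rewrite big_ltn // (@big_cat_nat _ _ _ K.+1) ?addnA.
by move=> d _; rewrite ltnS leq_div.
Qed.

Local Open Scope classical_set_scope.

Lemma card_fset_set_iota (A : set nat) B : (forall x, A x -> x < B) ->
  #|` fset_set A| = count (fun x => `[< A x >]) (iota 0 B).
Proof.
move=> AB; have eA : A = [set` [fset x in [seq x <- iota 0 B | `[< A x >]]]%fset].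
  apply/seteqP; split => x /=; rewrite !inE mem_filter; last by case/andP=> /asboolP.
  by move=> Ax; apply/andP; split; [apply/asboolP | rewrite mem_iota add0n AB].
rewrite {1}eA set_fsetK card_fseq undup_id ?filter_uniq ?iota_uniq //.
by rewrite size_filter.
Qed.

Lemma finite_set_bounded (A : set nat) B : (forall x, A x -> x < B) -> finite_set A.
Proof. by move=> AB; apply: (sub_finite_set _ (finite_II B)) => x /AB. Qed.

Definition refl_set F d : set nat := [set x | refl_sg F d x].

Lemma refl_set_reflective F d : admissible F d ->
  [/\ numerical_semigroup (refl_set F d), reflective (refl_set F d)
    & is_frobenius (refl_set F d) F].
Proof.
case/admissible_model; rewrite /refl_set /refl_sg.
set m := refl_m F d; set g := refl_g F d => d0 dm mg gmd eF.
have gap_lt x : ~ refl_model d m g x -> x < g.*2.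
  by move=> h; rewrite ltnNge; apply/negP => /(refl_model_ge d0 dm mg gmd).
have genus_g : genus [set x | refl_model d m g x] = g.
  rewrite /genus (card_fset_set_iota gap_lt).
  rewrite (eq_count (a2 := predC (refl_model d m g))); last first.
    by move=> x; rewrite asbool_neg asboolb.
  by apply: count_reflecting => z zg /=; rewrite refl_model_reflect.
split; [split; [|split]|split; [|]|split].
- exact: refl_model0.
- by move=> a b; apply: refl_model_add.
- exact: finite_set_bounded gap_lt.
- by rewrite genus_g; lia.
- move=> z; rewrite genus_g => zg /=; rewrite refl_model_reflect //.
  by case: refl_model; split.
- by rewrite eF; apply/negP/refl_model_frob.
- by move=> n /negP; rewrite eF; apply: refl_model_gap_le.
Qed.

Lemma reflective_refl_set S F : numerical_semigroup S -> reflective S ->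
  is_frobenius S F -> exists2 d, admissible F d & S = refl_set F d.
Proof.
case=> S0 [S_add _] [g_gt0 S_reflect] [SF S_gap_le].
pose s x := `[< S x >].
have gap_lt x : ~ S x -> x < F.+1 by move/S_gap_le.
have [] := @reflective_pred_model s F (genus S).
- exact/asboolP.
- by move=> x y /asboolP Sx /asboolP Sy; apply/asboolP; apply: S_add.
- exact: g_gt0.
- move=> z zg; have [SzN NSz] := S_reflect z zg.
  apply/asboolP/asboolPn => [/SzN|NSzg]; first by [].
  by apply: contrapT => /NSz.
- exact/asboolPn.
- by move=> n /asboolPn /S_gap_le.
- rewrite /genus (card_fset_set_iota gap_lt); apply: eq_count => x.
  by rewrite asbool_neg.
move=> d [adm sE]; exists d => //; rewrite /refl_set.
by apply/seteqP; split => x /=; rewrite -sE => /asboolP.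
Qed.

Lemma refl_set_inj F : {in [set d | admissible F d] &, injective (refl_set F)}.
Proof.
(* Two admissible models differ at the smaller multiplicity. *)
suff lt_neq d d' : admissible F d -> admissible F d' -> d < d' ->
    refl_set F d <> refl_set F d'.
  move=> d d'; rewrite !inE /= => ad ad' e.
  by case: (ltngtP d d') => // [/(lt_neq _ _ ad ad')|/(lt_neq _ _ ad' ad)]; rewrite e.
move=> ad ad' dd' e; have [d0 dm mg gmd eF] := admissible_model ad.
have [_ dm' mg' _ eF'] := admissible_model ad'.
have : refl_set F d' d by rewrite -e; apply: refl_model_d.
apply/negP; apply: refl_model_lt_multiplicity dm' mg' _ => //.
by rewrite -eF'; case/and4P: ad'.
Qed.

Lemma nF_countE F : nF F = count (admissible F) (iota 0 F.+2).
Proof.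
rewrite /nF; have -> : [set S : set nat | numerical_semigroup S /\ reflective S
      /\ is_frobenius S F] = refl_set F @` [set d | admissible F d].
  apply/seteqP; split => S /=; last by case=> d /refl_set_reflective[? ? ?] <-.
  by case=> nsS [rS fS]; have [d ad ->] := reflective_refl_set nsS rS fS; exists d.
have adm_lt d : [set d | admissible F d] d -> d < F.+2 by case/and4P.
have adm_fin := finite_set_bounded adm_lt.
rewrite fset_set_image // card_in_imfset; last first.
  by move=> d d'; rewrite !in_fset_set //; apply: refl_set_inj.
by rewrite (card_fset_set_iota adm_lt); apply: eq_count => d; rewrite asboolb.
Qed.

Local Open Scope ring_scope.

Section HarmonicEstimates.
Variable R : realType.

Lemma ln_succ_sub_le (x : R) : 0 < x -> ln (x + 1) - ln x <= x^-1.
Proof.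
move=> x0; have -> : ln (x + 1) - ln x = ln (1 + x^-1).
  by rewrite -ln_div ?posrE; [congr ln; field; lra|lra|lra].
have xV_gt0 : 0 < x^-1 by rewrite invr_gt0.
by apply: le_ln1Dx; lra.
Qed.

Lemma ln_succ_sub_ge (x : R) : 0 < x -> (x + 1)^-1 <= ln (x + 1) - ln x.
Proof.
move=> x0; have x1_gt0 : 0 < (x + 1)^-1 by rewrite invr_gt0; lra.
have x1_lt1 : (x + 1)^-1 < 1 by rewrite invf_lt1; lra.
have -> : ln (x + 1) - ln x = - ln (1 + - (x + 1)^-1).
  have -> : 1 + - (x + 1)^-1 = x / (x + 1) by field; lra.
  by rewrite ln_div ?posrE; lra.
by have := @le_ln1Dx _ (- (x + 1)^-1); lra.
Qed.

Definition harmonic_block K : R := \sum_(K.+1 <= j < K.*2.+2) j%:R^-1.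

Definition alt_harmonic K : R :=
  \sum_(1 <= k < K.+1) ((k.*2)%:R^-1 - (k.*2.+1)%:R^-1).

Lemma sum_ln_succ_sub K : \sum_(K.+1 <= j < K.*2.+2) (ln (j.+1%:R : R) - ln j%:R) = ln 2.
Proof.
rewrite telescope_sumr; last by lia.
have -> : (K.*2.+2)%:R = 2 * K.+1%:R :> R by rewrite -natrM mul2n doubleS.
by rewrite lnM ?posrE ?ltr0n //; lra.
Qed.

Lemma ln2_le_harmonic_block K : ln 2 <= harmonic_block K.
Proof.
rewrite -(sum_ln_succ_sub K); apply: ler_sum_nat => j /andP[j1 _].
by rewrite -natr1 ln_succ_sub_le // ltr0n; lia.
Qed.

Lemma harmonic_block_le K : harmonic_block K <= ln 2 + K.+1%:R^-1.
Proof.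
have telescope : \sum_(K.+1 <= j < K.*2.+2) (j%:R^-1 - j.+1%:R^-1)
    = K.+1%:R^-1 - K.*2.+2%:R^-1 :> R.
  rewrite (telescope_sumr_eq (fun j => - (j%:R : R)^-1)); first by rewrite opprK addrC.
    by lia.
  by move=> k _; rewrite opprK addrC.
have : harmonic_block K <= \sum_(K.+1 <= j < K.*2.+2)
    ((ln (j.+1%:R : R) - ln j%:R) + (j%:R^-1 - j.+1%:R^-1)).
  apply: ler_sum_nat => j /andP[j1 _].
  have j_gt0 : (0 : R) < j%:R by rewrite ltr0n; lia.
  by have := ln_succ_sub_ge j_gt0; rewrite -natr1; lra.
rewrite big_split /= telescope sum_ln_succ_sub.
have : 0 <= K.*2.+2%:R^-1 :> R by rewrite invr_ge0.
by move=> h1 h2; apply: (le_trans h2); rewrite lerD2l lerBlDr lerDl.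
Qed.

Lemma alt_harmonicD_harmonic_block K : alt_harmonic K + harmonic_block K = 1.
Proof.
elim: K => [|K IHK].
  by rewrite /alt_harmonic /harmonic_block big_geq // big_nat1 invr1 add0r.
pose V := \sum_(K.+2 <= j < K.*2.+2) (j%:R : R)^-1.
have eU : harmonic_block K = K.+1%:R^-1 + V by rewrite /harmonic_block big_ltn //; lia.
have eU' : harmonic_block K.+1 = V + K.+1.*2%:R^-1 + K.+1.*2.+1%:R^-1.
  rewrite /harmonic_block doubleS big_nat_recr /=; last lia.
  by rewrite big_nat_recr /=; last lia.
have half : K.+1.*2%:R^-1 = K.+1%:R^-1 / 2 :> R by rewrite -muln2 natrM invfM.
have eT : alt_harmonic K.+1 = alt_harmonic K + (K.+1.*2%:R^-1 - K.+1.*2.+1%:R^-1).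
  by rewrite /alt_harmonic big_nat_recr.
move: IHK; rewrite eT eU eU' half; clearbody V.
by set a := K.+1%:R^-1; set b := K.+1.*2.+1%:R^-1; lra.
Qed.

Lemma alt_harmonic_bounds K :
  1 - ln 2 - K.+1%:R^-1 <= alt_harmonic K <= 1 - ln 2.
Proof.
have := alt_harmonicD_harmonic_block K; have := ln2_le_harmonic_block K.
have := harmonic_block_le K; set a := K.+1%:R^-1.
by move=> *; apply/andP; split; lra.
Qed.

End HarmonicEstimates.

Section FloorEstimates.
Variable R : realType.

Lemma natr_divn_le n q : (0 < q)%N -> (n %/ q)%:R <= n%:R / q%:R :> R.
Proof. by move=> q0; rewrite ler_pdivlMr ?ltr0n // -natrM ler_nat leq_divM. Qed.

Lemma natr_divn_gt n q : (0 < q)%N -> n%:R / q%:R - 1 < (n %/ q)%:R :> R.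
Proof.
by move=> q0; rewrite ltrBlDr ltr_pdivrMr ?ltr0n // natr1 -natrM ltr_nat ltn_ceil.
Qed.

Lemma ler_subr_natrB a b : b%:R - a%:R <= (b - a)%:R :> R.
Proof.
case: (leqP a b) => [ab|/ltnW ba]; first by rewrite natrB.
by rewrite (eqP (_ : b - a == 0)%N) ?subn_eq0 // subr_le0 ler_nat.
Qed.

Lemma quot_count_le F k : (0 < k)%N ->
  (quot_count F k)%:R <= F%:R / k.*2%:R - F%:R / k.*2.+1%:R + 1 :> R.
Proof.
move=> k0; rewrite quot_countE //.
have k2 : (0 < k.*2)%N by rewrite double_gt0.
have A_le := natr_divn_le (F - 1)%N k2; have B_gt := natr_divn_gt F (ltn0Sn k.*2).
have F1F : (F - 1)%N%:R / k.*2%:R <= F%:R / k.*2%:R :> R.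
  by rewrite ler_pM2r ?invr_gt0 ?ltr0n // ler_nat leq_subr.
have uv : F%:R / k.*2.+1%:R <= F%:R / k.*2%:R :> R.
  by rewrite ler_wpM2l ?ler0n // lef_pV2 ?posrE ?ltr0n ?ler_nat.
move: A_le B_gt F1F uv; set A := ((F - 1) %/ k.*2)%N; set B := (F %/ k.*2.+1)%N.
set u := (F - 1)%N%:R / _; set v := F%:R / k.*2%:R; set w := F%:R / _.
case: (leqP A B) => [AB|/ltnW BA]; last by rewrite natrB //; lra.
have -> : (A - B = 0)%N by apply/eqP; rewrite subn_eq0.
by lra.
Qed.

Lemma quot_count_ge F k : (0 < k)%N -> (0 < F)%N ->
  F%:R / k.*2%:R - F%:R / k.*2.+1%:R - 2 <= (quot_count F k)%:R :> R.
Proof.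
move=> k0 F0; rewrite quot_countE //.
have k2 : (0 < k.*2)%N by rewrite double_gt0.
have := natr_divn_gt (F - 1)%N k2; have := natr_divn_le F (ltn0Sn k.*2).
have -> : (F - 1)%N%:R / k.*2%:R = F%:R / k.*2%:R - k.*2%:R^-1 :> R.
  by rewrite natrB // mulrBl mul1r.
have : k.*2%:R^-1 <= 1 :> R by rewrite invf_le1 ?ler1n ?ltr0n.
have := ler_subr_natrB (F %/ k.*2.+1) ((F - 1) %/ k.*2).
set u := F%:R / k.*2%:R; set v := F%:R / _; set p := k.*2%:R^-1.
by lra.
Qed.

End FloorEstimates.

Section Asymptotics.
Variable R : realType.

Lemma sum_quot_count_le F K :
  \sum_(1 <= k < K.+1) (quot_count F k)%:R <= F%:R * alt_harmonic R K + K%:R.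
Proof.
have -> : K%:R = \sum_(1 <= k < K.+1) 1 :> R by rewrite sumr_const_nat subn1.
rewrite /alt_harmonic mulr_sumr -big_split /=.
by apply: ler_sum_nat => k /andP[k0 _]; rewrite mulrBr quot_count_le.
Qed.

Lemma sum_quot_count_ge F K : (0 < F)%N ->
  F%:R * alt_harmonic R K - 2 * K%:R <= \sum_(1 <= k < K.+1) (quot_count F k)%:R.
Proof.
move=> F0; have -> : 2 * K%:R = \sum_(1 <= k < K.+1) 2 :> R.
  by rewrite sumr_const_nat subn1 mulr_natr.
rewrite /alt_harmonic mulr_sumr -sumrB.
by apply: ler_sum_nat => k /andP[k0 _]; rewrite mulrBr quot_count_ge.
Qed.

Lemma nF_bounds F K : (0 < K)%N -> (K <= F)%N ->
  (1 - ln 2) * F%:R - F%:R / K.+1%:R - 2 * K%:R <= (nF F)%:R :> R /\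
  (nF F)%:R <= 1 + (1 - ln 2) * F%:R + K%:R + F%:R / K.+1.*2%:R :> R.
Proof.
move=> K0 KF; have F0 : (0 < F)%N by lia.
rewrite nF_countE (count_admissible_split KF) 2!natrD natr_sum.
have q0 : (quot_count F 0)%:R <= 1 :> R by rewrite -[1]/(1%:R) ler_nat quot_count0.
have tail : (\sum_(K.+1 <= k < F.+1) quot_count F k)%:R <= F%:R / K.+1.*2%:R :> R.
  by apply: le_trans (natr_divn_le _ _ _); rewrite ?ler_nat ?sum_quot_count_tail.
have [T_ge T_le] := andP (alt_harmonic_bounds R K).
have F_ge0 : 0 <= F%:R :> R by [].
have := sum_quot_count_le F K; have := sum_quot_count_ge K F0.
have := ler_wpM2l F_ge0 T_ge; have := ler_wpM2l F_ge0 T_le; move: q0 tail.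
set q := (quot_count F 0)%:R; set t := (\sum_(K.+1 <= k < F.+1) _)%:R.
set s := \sum_(1 <= k < K.+1) _; set T := alt_harmonic R K.
set a := F%:R / _; set b := K.+1%:R^-1.
have q_ge0 : 0 <= q by []; have t_ge0 : 0 <= t by [].
by move=> *; split; nra.
Qed.

Lemma exists_isqrt n : exists K, (K * K <= n < K.+1 * K.+1)%N.
Proof.
elim: n => [|n [K /andP[lo hi]]]; first by exists 0%N.
by case: (ltnP n.+1 (K.+1 * K.+1)) => h; [exists K | exists K.+1]; lia.
Qed.

(* Balance the two error terms of nF_bounds by cutting at K = isqrt F. *)
Lemma nF_sqrt_bound F : (1 <= F)%N ->
  `|(nF F)%:R - (1 - ln 2) * F%:R| <= 4 * Num.sqrt (F%:R : R).
Proof.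
move=> F1; have [K /andP[KK_le lt_KK]] := exists_isqrt F.
have K0 : (0 < K)%N by case: K KK_le lt_KK => //=; lia.
have KF : (K <= F)%N by apply: leq_trans KK_le; rewrite leq_pmulr.
have [lo up] := nF_bounds K0 KF.
have K_le_sqrt : K%:R <= Num.sqrt (F%:R : R).
  rewrite -[K%:R]ger0_norm ?ler0n // -sqrtr_sqr.
  by apply: ler_wsqrtr; rewrite expr2 -natrM ler_nat.
have K_ge1 : 1 <= K%:R :> R by rewrite ler1n.
have a_lt : F%:R / K.+1%:R < K%:R + 1 :> R.
  by rewrite ltr_pdivrMr ?ltr0n // natr1 -natrM ltr_nat.
have b_le : F%:R / K.+1.*2%:R <= (K%:R + 1) / 2 :> R.
  rewrite ler_pdivrMr ?ltr0n // -muln2 natrM natr1 mulrA.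
  by rewrite mulrAC divfK ?pnatr_eq0 // -natrM ler_nat ltnW.
move: lo up a_lt b_le K_le_sqrt K_ge1.
set n := (nF F)%:R; set f := F%:R; set k := K%:R; set a := f / _; set b := f / _.
by move=> *; rewrite ler_norml; apply/andP; split; lra.
Qed.

End Asymptotics.

Lemma cvg_div_of_sqrt_bound (R : realType) (u : nat -> R) (c C : R) N :
  (forall n, (N <= n)%N -> `|u n - c * n%:R| <= C * Num.sqrt n%:R) ->
  (fun n : nat => u n / (n%:R : R)) @ \oo --> c.
Proof.
move=> u_near; apply/cvgrPdist_le => eps eps_gt0.
near=> n; have n_gt0 : 0 < n%:R :> R by rewrite ltr0n; near: n; exists 1%N.
have sn_gt0 : 0 < Num.sqrt n%:R :> R by rewrite sqrtr_gt0.
have Cs_le : C / eps <= Num.sqrt n%:R.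
  rewrite (le_trans (ler_norm _)) // -sqrtr_sqr ler_wsqrtr //.
  by near: n; apply: nbhs_infty_ger.
have -> : c - u n / n%:R = - ((u n - c * n%:R) / n%:R).
  by field; rewrite gt_eqF.
rewrite normrN normf_div (gtr0_norm n_gt0) ler_pdivrMr //.
apply: (le_trans (u_near n _)); last first.
  have ss : Num.sqrt n%:R * Num.sqrt n%:R = n%:R :> R by rewrite -expr2 sqr_sqrtr ?ltW.
  by rewrite -[in X in _ <= _ * X]ss mulrA ler_pM2r // mulrC -ler_pdivrMr.
by near: n; exists N.
Unshelve. all: by end_near.
Qed.

Theorem mainTheorem20 (R : realType) :
  (exists C : R, exists N : nat, forall F : nat, (N <= F)%N ->
     `| (nF F)%:R - (1 - ln 2) * F%:R | <= C * Num.sqrt (F%:R : R))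
  /\ ((fun F : nat => (nF F)%:R / (F%:R : R)) @ \oo --> (1 - ln (2 : R))).
Proof.
split; first by exists 4, 1%N; apply: nF_sqrt_bound.
exact: cvg_div_of_sqrt_bound (@nF_sqrt_bound R).
Qed.
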